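(* Let $L$ be a frame. A filter $F\subseteq L$ is exact if and only if it is an intersection of filters of the form $\{a\in L\mid y\le a\vee x\}$ for some $x,y\in L$. More precisely, $F$ is exact if and only if $$F=\{a\in L\mid \forall x,y\in L\ \big((\forall f\in F,\ y\le f\vee x)\Rightarrow y\le a\vee x\big)\}.$$
   Context: A frame is a complete lattice $L$ with $(\bigvee A)\wedge b=\bigvee_{a\in A}(a\wedge b)$. A filter is a nonempty up-closed subset closed under finite meets. A meet $\bigwedge M$ ($M\subseteq L$) is exact if $(\bigwedge M)\vee b=\bigwedge_{a\in M}(a\vee b)$ for all $b\in L$; a filter is exact if it contains $\bigwedge M$ whenever $M\subseteq F$ and $\bigwedge M$ is exact. *)

Set Implicit Arguments.

Section FrameDefs.
Context {T : Type}.

Definition join (Sup : (T -> Prop) -> T) (a b : T) : T := Sup (fun x => x = a \/ x = b).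
Definition meet (Inf : (T -> Prop) -> T) (a b : T) : T := Inf (fun x => x = a \/ x = b).

Record is_frame (le : T -> T -> Prop) (Sup Inf : (T -> Prop) -> T) : Prop := {
  fr_refl : forall a, le a a;
  fr_trans : forall a b c, le a b -> le b c -> le a c;
  fr_antisym : forall a b, le a b -> le b a -> a = b;
  fr_Sup_ub : forall (A : T -> Prop) a, A a -> le a (Sup A);
  fr_Sup_least : forall (A : T -> Prop) b, (forall a, A a -> le a b) -> le (Sup A) b;
  fr_Inf_lb : forall (A : T -> Prop) a, A a -> le (Inf A) a;
  fr_Inf_greatest : forall (A : T -> Prop) b, (forall a, A a -> le b a) -> le b (Inf A);
  fr_distr : forall (A : T -> Prop) b,
      meet Inf (Sup A) b = Sup (fun c => exists a, A a /\ c = meet Inf a b)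
}.

Definition is_filter (le : T -> T -> Prop) (Sup Inf : (T -> Prop) -> T) (F : T -> Prop) : Prop :=
  (exists a, F a) /\
  (forall a b, F a -> le a b -> F b) /\
  (forall a b, F a -> F b -> F (meet Inf a b)).

Definition exact_meet (le : T -> T -> Prop) (Sup Inf : (T -> Prop) -> T) (M : T -> Prop) : Prop :=
  forall b, join Sup (Inf M) b = Inf (fun c => exists a, M a /\ c = join Sup a b).

Definition exact_filter (le : T -> T -> Prop) (Sup Inf : (T -> Prop) -> T) (F : T -> Prop) : Prop :=
  forall M : T -> Prop, (forall m, M m -> F m) -> exact_meet le Sup Inf M -> F (Inf M).

End FrameDefs.


(* Every filter lies in the join-filters [{a | y <= a \/ x}] containing it, so
   exactness amounts to the converse inclusion.  Exact meets are preserved by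
   these filters, since [y <= (/\ M) \/ x = /\ {m \/ x | m in M}] as soon as
   [y <= m \/ x] for all [m] in [M]; hence intersections of them are exact.
   Conversely, if [a] lies in every join-filter containing an exact filter [F],
   then the meet of [M = {f \/ a | f in F}] is [a], and it is exact: both facts
   follow by testing [a] against the join-filters with [x = a] and [x = a \/ b].
   As [M] is contained in [F], so is [a]. *)

Set Implicit Arguments.

Record is_complete_lattice {T : Type} (le : T -> T -> Prop)
    (Sup Inf : (T -> Prop) -> T) : Prop := {
  cl_refl : forall a, le a a;
  cl_trans : forall a b c, le a b -> le b c -> le a c;
  cl_antisym : forall a b, le a b -> le b a -> a = b;
  cl_Sup_ub : forall (A : T -> Prop) a, A a -> le a (Sup A);
  cl_Sup_least : forall (A : T -> Prop) b, (forall a, A a -> le a b) -> le (Sup A) b;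
  cl_Inf_lb : forall (A : T -> Prop) a, A a -> le (Inf A) a;
  cl_Inf_greatest : forall (A : T -> Prop) b, (forall a, A a -> le b a) -> le b (Inf A)
}.

Lemma frame_is_complete_lattice (T : Type) (le : T -> T -> Prop)
    (Sup Inf : (T -> Prop) -> T) :
  is_frame le Sup Inf -> is_complete_lattice le Sup Inf.
Proof. intros []; constructor; assumption. Qed.

Definition upward_closed (T : Type) (le : T -> T -> Prop) (F : T -> Prop) : Prop :=
  forall a b, F a -> le a b -> F b.

Lemma filter_upward_closed (T : Type) (le : T -> T -> Prop)
    (Sup Inf : (T -> Prop) -> T) (F : T -> Prop) :
  is_filter le Sup Inf F -> upward_closed le F.
Proof. intros (_ & Hup & _). exact Hup. Qed.

Section CompleteLattice.
Context (T : Type) (le : T -> T -> Prop) (Sup Inf : (T -> Prop) -> T)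
  (HL : is_complete_lattice le Sup Inf).

Local Notation "a ⊔ b" := (join Sup a b) (at level 40, left associativity).

Lemma join_ub_l a b : le a (a ⊔ b).
Proof. apply (cl_Sup_ub HL); auto. Qed.

Lemma join_ub_r a b : le b (a ⊔ b).
Proof. apply (cl_Sup_ub HL); auto. Qed.

Lemma join_least a b c : le a c -> le b c -> le (a ⊔ b) c.
Proof. intros Hac Hbc; apply (cl_Sup_least HL); intros x [-> | ->]; assumption. Qed.

Lemma join_assoc_le a b c : le ((a ⊔ b) ⊔ c) (a ⊔ (b ⊔ c)).
Proof.
  apply join_least; [apply join_least|].
  - apply join_ub_l.
  - apply (cl_trans HL) with (b ⊔ c); [apply join_ub_l | apply join_ub_r].
  - apply (cl_trans HL) with (b ⊔ c); [apply join_ub_r | apply join_ub_r].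
Qed.

Definition join_filter_hull (F : T -> Prop) (a : T) : Prop :=
  forall x y, (forall f, F f -> le y (f ⊔ x)) -> le y (a ⊔ x).

Lemma join_filter_hull_sub F a : F a -> join_filter_hull F a.
Proof. intros Fa x y Hy; exact (Hy a Fa). Qed.

Lemma exact_filter_of_join_filters F (S : T -> T -> Prop) :
  (forall a, F a <-> (forall x y, S x y -> le y (a ⊔ x))) ->
  exact_filter le Sup Inf F.
Proof.
  intros HS M HMF Hexact.
  apply HS; intros x y Sxy.
  rewrite (Hexact x).
  apply (cl_Inf_greatest HL); intros c (m & Mm & ->).
  apply HS; auto.
Qed.

Section JoinsWith.
Variables (F : T -> Prop) (a : T).
Hypothesis Fa_hull : join_filter_hull F a.

Definition joins_with (c : T) : Prop := exists f, F f /\ c = f ⊔ a.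

Lemma joins_with_sub : upward_closed le F -> forall c, joins_with c -> F c.
Proof. intros Hup c (f & Ff & ->); apply (Hup f); [exact Ff | apply join_ub_l]. Qed.

Lemma Inf_joins_with : Inf joins_with = a.
Proof.
  apply (cl_antisym HL).
  - apply (cl_trans HL) with (a ⊔ a).
    + apply Fa_hull; intros f Ff; apply (cl_Inf_lb HL); exists f; auto.
    + apply join_least; apply (cl_refl HL).
  - apply (cl_Inf_greatest HL); intros c (f & _ & ->); apply join_ub_r.
Qed.

Lemma exact_meet_joins_with : exact_meet le Sup Inf joins_with.
Proof.
  intros b; rewrite Inf_joins_with; apply (cl_antisym HL).
  - apply (cl_Inf_greatest HL); intros c (m & (f & _ & ->) & ->).
    apply join_least.
    + apply (cl_trans HL) with (f ⊔ a); [apply join_ub_r | apply join_ub_l].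
    + apply join_ub_r.
  - apply (cl_trans HL) with (a ⊔ (a ⊔ b)).
    + apply Fa_hull; intros f Ff.
      apply (cl_trans HL) with ((f ⊔ a) ⊔ b); [|apply join_assoc_le].
      apply (cl_Inf_lb HL); exists (f ⊔ a); split; [exists f; auto | reflexivity].
    + apply join_least; [apply join_ub_l | apply (cl_refl HL)].
Qed.

End JoinsWith.

Lemma exact_filter_join_filter_hull F :
  upward_closed le F -> exact_filter le Sup Inf F ->
  forall a, join_filter_hull F a -> F a.
Proof.
  intros Hup Hexact a Ha.
  rewrite <- (Inf_joins_with Ha).
  apply Hexact.
  - exact (joins_with_sub Hup).
  - exact (exact_meet_joins_with Ha).
Qed.

End CompleteLattice.

Theorem mainTheorem6 (T : Type) (le : T -> T -> Prop) (Sup Inf : (T -> Prop) -> T)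
  (HL : is_frame le Sup Inf) (F : T -> Prop) (HF : is_filter le Sup Inf F) :
  (exact_filter le Sup Inf F <->
     exists S : T -> T -> Prop,
       forall a, F a <-> (forall x y, S x y -> le y (join Sup a x))) /\
  (exact_filter le Sup Inf F <->
     forall a, F a <->
       (forall x y, (forall f, F f -> le y (join Sup f x)) -> le y (join Sup a x))).
Proof.
  pose proof (frame_is_complete_lattice HL) as HCL.
  assert (Hhull : exact_filter le Sup Inf F -> forall a, F a <-> join_filter_hull le Sup F a).
  { intros Hexact a; split.
    - apply join_filter_hull_sub.
    - apply (exact_filter_join_filter_hull HCL (filter_upward_closed HF) Hexact). }
  split; split.
  - intros Hexact; eexists; exact (Hhull Hexact).
  - intros [S HS]; exact (exact_filter_of_join_filters HCL F S HS).
  - exact Hhull.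
  - intros H; exact (exact_filter_of_join_filters HCL F _ H).
Qed.
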